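(* Let $\tilde c(n)$ be the number of (isomorphism classes of) trees $T\in\mathcal{T}_n$ with $\mathcal{C}(T)=c_n$. Then $\tilde c(1)=1$ and for every $n\ge2$, $$\tilde c(n)=\sum_{(n_a,n_b)\in\widetilde{QB}(n)}\tilde c(n_a)\,\tilde c(n_b)+\binom{\tilde c(n/2)+1}{2}\,\delta_{even}(n),$$ where $\widetilde{QB}(n)=\{(n_a,n_b)\in QB(n): n_a>n_b\}$ and $\delta_{even}(n)=1$ if $n$ is even and $0$ otherwise.
   Context: Bifurcating trees: rooted trees in which every internal node has exactly two children; $\mathcal{T}_n$ is the set of isomorphism classes of bifurcating trees with $n$ leaves. The Colless index is $\mathcal{C}(T)=\sum_{v}|\kappa_T(v_1)-\kappa_T(v_2)|$, summed over internal nodes $v$ with children $v_1,v_2$, where $\kappa_T(w)$ is the number of leaves descending from $w$; $c_n=\min\{\mathcal{C}(T):T\in\mathcal{T}_n\}$. For $n\ge2$, $QB(n)=\{(n_a,n_b)\in\mathbb{N}^2: n_a\ge n_b\ge1,\ n_a+n_b=n,\ c_{n_a}+c_{n_b}+n_a-n_b=c_n\}$. *)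

From mathcomp Require Import all_boot.
Set Implicit Arguments. Unset Strict Implicit. Unset Printing Implicit Defensive.

(* Rooted bifurcating trees (ordered representation; isomorphism below). *)
Inductive tree := Leaf | Node of tree & tree.

Fixpoint leaves (t : tree) : nat :=
  match t with Leaf => 1 | Node l r => leaves l + leaves r end.

Fixpoint colless (t : tree) : nat :=
  match t with
  | Leaf => 0
  | Node l r => colless l + colless r + (maxn (leaves l) (leaves r) - minn (leaves l) (leaves r))
  end.

Fixpoint iso (s t : tree) : bool :=
  match s, t with
  | Leaf, Leaf => true
  | Node a b, Node c d => (iso a c && iso b d) || (iso a d && iso b c)
  | _, _ => false
  end.

Fixpoint all_trees (d : nat) : seq tree :=
  match d with
  | 0 => [:: Leaf]
  | d'.+1 => Leaf :: [seq Node l r | l <- all_trees d', r <- all_trees d']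
  end.

(* All ordered trees with n leaves (such a tree has depth < n). *)
Definition trees_n (n : nat) : seq tree :=
  [seq t <- all_trees n | leaves t == n].

(* c_n = min Colless index over T_n (n >= 1). *)
Definition cmin (n : nat) : nat :=
  foldr minn (colless (head Leaf (trees_n n))) [seq colless t | t <- trees_n n].

(* One representative per equivalence class of r in s (r an equivalence). *)
Definition reps (T : Type) (r : T -> T -> bool) (s : seq T) : seq T :=
  foldr (fun x acc => if has (r x) acc then acc else x :: acc) [::] s.

Definition ctilde (n : nat) : nat :=
  size (reps iso [seq t <- trees_n n | colless t == cmin n]).

Definition QB (n : nat) (p : nat * nat) : bool :=
  [&& p.1 >= p.2, p.2 >= 1, p.1 + p.2 == n & cmin p.1 + cmin p.2 + p.1 - p.2 == cmin n].

Definition QBt (n : nat) (p : nat * nat) : bool := QB n p && (p.1 > p.2).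

Definition delta_even (n : nat) : nat := if odd n then 0 else 1.

From HB Require Import structures.
From mathcomp Require Import all_boot zify.

(* Isomorphism classes are handled through canonical forms: an injective [key]
   on ordered trees lets [canon] orient every internal node, larger key first,
   and two trees are isomorphic iff their canonical forms agree.  Hence ctilde n
   is the length of the duplicate-free list [minimal n] of canonical trees with
   n leaves and Colless index c_n.

   On the arithmetic side, c_n is attained (trees with n leaves are enumerated),
   grafting gives c_(a+b) <= c_a + c_b + |a - b|, and an induction on trees gives
   the lower bound c_(2m) >= 2 c_m (with its odd companion), so c_(2m) = 2 c_m.
   Consequently a canonical node is minimal iff its children are minimal and its
   root split satisfies the QB equation.  For n >= 2 the list [minimal n] is
   therefore a permutation of [unbalanced n], made of one block of
   ctilde(na) * ctilde(nb) trees for each split (na, nb) in QBt(n), followed by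
   [balanced n], the unordered pairs of minimal trees with n/2 leaves, of which
   there are binomial(ctilde(n/2) + 1, 2).  Counting both lists proves the
   theorem. *)

(* Countable structure on trees, through the generic trees of [choice];
   its injective [pickle] is the key used to orient internal nodes. *)
Fixpoint tree_to_gen (t : tree) : GenTree.tree unit :=
  match t with
  | Leaf => GenTree.Leaf tt
  | Node l r => GenTree.Node 0 [:: tree_to_gen l; tree_to_gen r]
  end.

Fixpoint gen_to_tree (g : GenTree.tree unit) : option tree :=
  match g with
  | GenTree.Leaf _ => Some Leaf
  | GenTree.Node _ [:: a; b] =>
      if (gen_to_tree a, gen_to_tree b) is (Some l, Some r) then Some (Node l r)
      else None
  | _ => None
  end.

Lemma tree_to_genK : pcancel tree_to_gen gen_to_tree.
Proof. by elim=> [|l IHl r IHr] //=; rewrite IHl IHr. Qed.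

HB.instance Definition _ := Countable.copy tree (pcan_type tree_to_genK).

Definition key (t : tree) : nat := pickle t.

Lemma key_inj : injective key.
Proof. exact: (pcan_inj pickleK). Qed.

Lemma leaves_gt0 t : 0 < leaves t.
Proof. by elim: t => //= l IHl r IHr; rewrite addn_gt0 IHl. Qed.

Fixpoint depth (t : tree) : nat :=
  if t is Node l r then (maxn (depth l) (depth r)).+1 else 0.

(* A tree with n leaves has depth < n, so [trees_n n] lists all of them. *)
Lemma depth_lt_leaves t : depth t < leaves t.
Proof.
by elim: t => //= l IHl r IHr; have := leaves_gt0 l; have := leaves_gt0 r; lia.
Qed.

Lemma mem_all_trees d t : depth t <= d -> t \in all_trees d.
Proof.
elim: d t => [|d IH] [|l r] //=; rewrite ?inE ?eqxx // => hd.
by rewrite allpairs_f ?orbT // IH //; move: hd; rewrite ltnS geq_max => /andP[].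
Qed.

Lemma mem_trees_n n t : (t \in trees_n n) = (leaves t == n).
Proof.
rewrite mem_filter; case: eqP => //= <-; apply: mem_all_trees.
exact: ltnW (depth_lt_leaves t).
Qed.

(* The caterpillar with k.+1 leaves shows that T_n is not empty for n > 0. *)
Fixpoint caterpillar (k : nat) : tree :=
  if k is k'.+1 then Node (caterpillar k') Leaf else Leaf.

Lemma leaves_caterpillar k : leaves (caterpillar k) = k.+1.
Proof. by elim: k => //= k ->; rewrite addn1. Qed.

Lemma foldr_minn_le x0 s y : y \in s -> foldr minn x0 s <= y.
Proof.
elim: s => //= x s IH; rewrite inE => /orP [/eqP ->|/IH h]; first exact: geq_minl.
exact: leq_trans (geq_minr _ _) h.
Qed.

Lemma foldr_minn_in x0 s : foldr minn x0 s \in x0 :: s.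
Proof.
elim: s => [|x s IH] /=; first by rewrite inE.
rewrite /minn; case: ifP => _; first by rewrite !inE eqxx orbT.
by move: IH; rewrite !inE => /orP [->|->]; rewrite ?orbT.
Qed.

Lemma cmin_le t : cmin (leaves t) <= colless t.
Proof. by apply/foldr_minn_le/map_f; rewrite mem_trees_n. Qed.

Lemma cmin_attained n : 0 < n -> exists2 t, leaves t = n & colless t = cmin n.
Proof.
move=> n_gt0.
have cat_n : caterpillar n.-1 \in trees_n n.
  by rewrite mem_trees_n leaves_caterpillar prednK.
have : cmin n \in [seq colless t | t <- trees_n n].
  move: (foldr_minn_in (colless (head Leaf (trees_n n))) [seq colless t | t <- trees_n n]).
  rewrite -/(cmin n) inE => /orP [/eqP ->|//].
  by case: (trees_n n) cat_n => //= t0 ts _; rewrite inE eqxx.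
by case/mapP => t; rewrite mem_trees_n => /eqP <- ->; exists t.
Qed.

Lemma cmin0 : cmin 0 = 0. Proof. by vm_compute. Qed.
Lemma cmin1 : cmin 1 = 0. Proof. by vm_compute. Qed.

(* Grafting minimal trees with a and b leaves on a common root:
   c_(a+b) <= c_a + c_b + |a - b|  (trivially true when a or b is 0). *)
Lemma cmin_graft a b : cmin (a + b) <= cmin a + cmin b + (maxn a b - minn a b).
Proof.
have [->|a_gt0] := posnP a; first by rewrite add0n cmin0; lia.
have [->|b_gt0] := posnP b; first by rewrite addn0 cmin0; lia.
have [ta <- ca] := cmin_attained _ a_gt0; have [tb <- cb] := cmin_attained _ b_gt0.
by have := cmin_le (Node ta tb); rewrite /= ca cb.
Qed.

(* A lower bound for the Colless index of trees with n leaves: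
   2 c_m for n = 2m, and c_(m+1) + c_m + [m > 0] for n = 2m + 1. *)
Definition halving_bound (n : nat) : nat :=
  if odd n then cmin n./2.+1 + cmin n./2 + (1 < n) else cmin n./2 + cmin n./2.

Lemma halving_bound_even p : halving_bound p.*2 = cmin p + cmin p.
Proof. by rewrite /halving_bound odd_double doubleK. Qed.

Lemma halving_bound_odd p : halving_bound p.*2.+1 = cmin p.+1 + cmin p + (0 < p).
Proof.
by rewrite /halving_bound /= odd_double uphalf_double ltnS double_gt0.
Qed.

(* The three ways of splitting the leaves at the root, by parity: in each case
   the bounds of the subtrees plus the root imbalance exceed the halving bound,
   by grafting minimal trees of (half-)sizes. *)
Lemma halving_even_even p q :
  cmin (p + q) + cmin (p + q) <=
    cmin p + cmin p + (cmin q + cmin q) + (maxn p.*2 q.*2 - minn p.*2 q.*2).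
Proof. by have := cmin_graft p q; lia. Qed.

Lemma halving_odd_even p q : 0 < q ->
  cmin (p + q).+1 + cmin (p + q) + (0 < p + q) <=
    cmin p.+1 + cmin p + (0 < p) + (cmin q + cmin q) +
    (maxn p.*2.+1 q.*2 - minn p.*2.+1 q.*2).
Proof.
move=> q_gt0; have [->|p_gt0] := posnP p.
  by have := cmin_graft 1 q; rewrite add0n add1n cmin1 cmin0; lia.
by have := cmin_graft p.+1 q; have := cmin_graft p q; rewrite addSn; lia.
Qed.

Lemma halving_odd_odd p q :
  cmin (p + q).+1 + cmin (p + q).+1 <=
    cmin p.+1 + cmin p + (0 < p) + (cmin q.+1 + cmin q + (0 < q)) +
    (maxn p.*2.+1 q.*2.+1 - minn p.*2.+1 q.*2.+1).
Proof.
have := cmin_graft p.+1 q; have := cmin_graft p q.+1; rewrite addSn addnS.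
by have [->|_] := posnP p; have [->|_] := posnP q;
  rewrite ?add0n ?addn0 ?cmin0 ?cmin1; lia.
Qed.

Lemma even_or_odd a : exists p, a = p.*2 \/ a = p.*2.+1.
Proof.
by exists a./2; rewrite -{1 3}(odd_double_half a); case: odd; [right|left].
Qed.

Lemma halving_bound_le t : halving_bound (leaves t) <= colless t.
Proof.
elim: t => [|l IHl r IHr] /=; first by rewrite /halving_bound.
move: IHl IHr (leaves_gt0 l) (leaves_gt0 r).
have [p [->|->]] := even_or_odd (leaves l); have [q [->|->]] := even_or_odd (leaves r);
  rewrite ?halving_bound_even ?halving_bound_odd ?double_gt0 => IHl IHr p_gt0 q_gt0.
- rewrite -doubleD halving_bound_even.
  by have := halving_even_even p q; lia.
- rewrite addnS -doubleD halving_bound_odd addnC maxnC minnC.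
  by have := halving_odd_even q p p_gt0; rewrite [q + p]addnC; lia.
- rewrite addSn -doubleD halving_bound_odd.
  by have := halving_odd_even p q q_gt0; lia.
- rewrite addSn addnS -doubleD -doubleS halving_bound_even.
  by have := halving_odd_odd p q; lia.
Qed.

(* Hence c_(2m) = 2 c_m: the balanced split (m, m) is always in QB(2m). *)
Lemma cmin_double m : 0 < m -> cmin m.*2 = cmin m + cmin m.
Proof.
move=> m_gt0; apply/eqP; rewrite eqn_leq; apply/andP; split.
  by have := cmin_graft m m; rewrite addnn maxnn minnn subnn addn0.
have [t leaves_t <-] : exists2 t, leaves t = m.*2 & colless t = cmin m.*2.
  by apply: cmin_attained; rewrite double_gt0.
by rewrite -halving_bound_even -leaves_t halving_bound_le.
Qed.

Lemma minimal_node {x y} : colless (Node x y) = cmin (leaves x + leaves y) ->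
  [/\ colless x = cmin (leaves x), colless y = cmin (leaves y) &
      cmin (leaves x) + cmin (leaves y)
        + (maxn (leaves x) (leaves y) - minn (leaves x) (leaves y))
      = cmin (leaves x + leaves y)].
Proof.
rewrite /= => h; have := cmin_le x; have := cmin_le y.
by have := cmin_graft (leaves x) (leaves y); split; lia.
Qed.

Definition orient (x y : tree) : tree :=
  if key y <= key x then Node x y else Node y x.

Fixpoint canon (t : tree) : tree :=
  if t is Node l r then orient (canon l) (canon r) else Leaf.

Lemma orientE x y : orient x y = Node x y \/ orient x y = Node y x.
Proof. by rewrite /orient; case: ifP; [left|right]. Qed.

Lemma orient_Node x y : key y <= key x -> orient x y = Node x y.
Proof. by rewrite /orient => ->. Qed.

Lemma orientC x y : orient x y = orient y x.
Proof.
rewrite /orient; case: (leqP (key y) (key x)) => h1; case: (leqP (key x) (key y)) => h2 //.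
- by have /key_inj -> : key x = key y by apply/eqP; rewrite eqn_leq h1 h2.
- by have := ltn_trans h1 h2; rewrite ltnn.
Qed.

Lemma orient_inj x y u v :
  orient x y = orient u v -> (x = u /\ y = v) \/ (x = v /\ y = u).
Proof. by case: (orientE x y) => ->; case: (orientE u v) => -> [-> ->]; auto. Qed.

Lemma leaves_orient x y : leaves (orient x y) = leaves x + leaves y.
Proof. by case: (orientE x y) => -> //=; rewrite addnC. Qed.

Lemma colless_orient x y : colless (orient x y) = colless (Node x y).
Proof. by case: (orientE x y) => -> //=; rewrite maxnC minnC [colless y + _]addnC. Qed.

Lemma iso_canon s t : iso s t = (canon s == canon t).
Proof.
elim: s t => [|a IHa b IHb] [|c d] //=.
- by case: (orientE (canon c) (canon d)) => ->.
- by case: (orientE (canon a) (canon b)) => ->.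
rewrite !IHa !IHb; apply/idP/eqP.
  by case/orP => /andP [/eqP -> /eqP ->] //; exact: orientC.
by case/orient_inj => [[-> ->]|[-> ->]]; rewrite !eqxx ?orbT.
Qed.

Lemma canon_orient x y :
  canon x = x -> canon y = y -> canon (orient x y) = orient x y.
Proof.
by move=> cx cy; case: (orientE x y) => e; rewrite {1}e /= cx cy // orientC.
Qed.

Lemma canon_idem t : canon (canon t) = canon t.
Proof. by elim: t => //= l IHl r IHr; rewrite canon_orient. Qed.

Lemma leaves_canon t : leaves (canon t) = leaves t.
Proof. by elim: t => //= l IHl r IHr; rewrite leaves_orient IHl IHr. Qed.

Lemma colless_canon t : colless (canon t) = colless t.
Proof. by elim: t => //= l IHl r IHr; rewrite colless_orient /= !leaves_canon IHl IHr. Qed.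

Lemma canon_node {x y} : canon (Node x y) = Node x y ->
  [/\ canon x = x, canon y = y & key y <= key x].
Proof.
rewrite /= /orient; case: ifP => h [e1 e2]; first by rewrite e1 e2 in h.
have exy : x = y by rewrite -e1 -e2 canon_idem.
by rewrite -exy in e1 e2 *; rewrite e2.
Qed.

Lemma size_reps (T U : eqType) (r : T -> T -> bool) (f : T -> U) s :
  (forall x y, r x y = (f x == f y)) -> size (reps r s) = size (undup (map f s)).
Proof.
move=> rE.
have [uniq_reps mem_reps] : uniq (map f (reps r s)) /\ map f (reps r s) =i map f s.
  elim: s => [|x s [IH1 IH2]] //=.
  have -> : has (r x) (reps r s) = (f x \in map f (reps r s)).
    apply/hasP/mapP => [[y hy]|[y hy] e]; first by rewrite rE => /eqP; exists y.
    by exists y; rewrite // rE e.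
  case: ifP => h /=.
    by split => // z; rewrite inE IH2; case: eqP => // ->; rewrite -IH2 h.
  by rewrite h IH1; split => // z; rewrite !inE IH2.
rewrite -(size_map f); apply/perm_size/uniq_perm; rewrite ?undup_uniq //.
by move=> z; rewrite mem_undup mem_reps.
Qed.

Lemma uniq_flatten_lab {I T : eqType} (lab : T -> I) (s : seq I) (F : I -> seq T) :
  uniq s -> (forall i, i \in s -> uniq (F i)) ->
  (forall i x, i \in s -> x \in F i -> lab x = i) -> uniq (flatten [seq F i | i <- s]).
Proof.
elim: s => //= i s IH /andP [i_notin_s uniq_s] uniqF labF.
rewrite cat_uniq uniqF ?mem_head //= IH //; first last.
- by move=> j x js; apply: labF; rewrite inE js orbT.
- by move=> j js; apply: uniqF; rewrite inE js orbT.
rewrite andbT; apply/hasP => -[x /flatten_mapP [j js xj] xi].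
have js' : j \in i :: s by rewrite inE js orbT.
have := labF j x js' xj; rewrite (labF i x (mem_head _ _) xi) => ij.
by rewrite ij js in i_notin_s.
Qed.

Lemma size_flatten_map {I T : Type} (s : seq I) (F : I -> seq T) :
  size (flatten [seq F i | i <- s]) = \sum_(i <- s) size (F i).
Proof. by rewrite size_flatten sumnE /shape -map_comp big_map. Qed.

(* In a duplicate-free list of length m, the pairs (x, y) with k y <= k x, for
   an injective k (i.e. the unordered pairs with repetition), number
   binomial(m + 1, 2). *)
Lemma count_key_pairs {T : eqType} {k : T -> nat} {s : seq T} :
  injective k -> uniq s ->
  \sum_(x <- s) count (fun y => k y <= k x) s = 'C(size s + 1, 2).
Proof.
move=> k_inj; elim: s => [|x s IH] /=; first by rewrite big_nil.
case/andP => x_notin_s uniq_s; rewrite big_cons leqnn /=.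
rewrite (eq_bigr (fun z => (k x <= k z) + count (fun y => k y <= k z) s)) //.
have sum_count : \sum_(z <- s) (k x <= k z) = count (fun z => k x <= k z) s.
  by rewrite -sumn_count sumnE big_map.
rewrite big_split /= IH // sum_count.
have : count (fun y => k y <= k x) s + count (fun y => k x <= k y) s = size s.
  rewrite -count_predUI (eq_count (a2 := predT)) ?count_predT; last first.
    by move=> y /=; rewrite leq_total.
  rewrite (eq_count (a2 := pred1 x)) ?(count_memPn x_notin_s) ?addn0 //.
  by move=> y /=; rewrite -eqn_leq; apply/eqP/eqP => [/k_inj|->].
by rewrite !addn1 !binS !bin1 ?bin0; lia.
Qed.

Definition minimal (n : nat) : seq tree :=
  undup [seq canon t | t <- [seq t <- trees_n n | colless t == cmin n]].

Lemma ctilde_minimal n : ctilde n = size (minimal n).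
Proof. exact/size_reps/iso_canon. Qed.

Lemma mem_minimal n t :
  (t \in minimal n) = [&& canon t == t, leaves t == n & colless t == cmin n].
Proof.
rewrite mem_undup; apply/mapP/idP.
  case=> s; rewrite mem_filter mem_trees_n => /andP [/eqP cs /eqP ls] ->.
  by rewrite canon_idem leaves_canon colless_canon ls cs !eqxx.
case/and3P => /eqP ct /eqP lt /eqP cl; exists t => //.
by rewrite mem_filter mem_trees_n lt cl !eqxx.
Qed.

Lemma minimalP {n t} : t \in minimal n ->
  [/\ canon t = t, leaves t = n & colless t = cmin n].
Proof. by rewrite mem_minimal => /and3P [/eqP -> /eqP -> /eqP ->]. Qed.

Lemma QBtP n na nb :
  reflect [/\ nb < na, 0 < nb, na + nb = n & cmin na + cmin nb + (na - nb) = cmin n]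
          (QBt n (na, nb)).
Proof.
rewrite /QBt /QB /=.
apply: (iffP andP) => [[/and4P [? ? /eqP ? /eqP ?] ?]|[? ? ? ?]]; first by split=> //; lia.
by split=> //; apply/and4P; split=> //; apply/eqP; lia.
Qed.

Definition heavy (t : tree) : tree :=
  if t is Node x y then (if leaves y <= leaves x then x else y) else Leaf.
Definition light (t : tree) : tree :=
  if t is Node x y then (if leaves y <= leaves x then y else x) else Leaf.

Lemma heavy_orient l r : leaves r < leaves l ->
  heavy (orient l r) = l /\ light (orient l r) = r.
Proof.
move=> lt_rl; case: (orientE l r) => -> /=; first by rewrite ltnW.
by rewrite leqNgt lt_rl.
Qed.

Definition unbalanced_block (n na nb : nat) : seq tree :=
  if QBt n (na, nb) then flatten [seq [seq orient l r | r <- minimal nb] | l <- minimal na]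
  else [::].

Definition unbalanced (n : nat) : seq tree :=
  flatten [seq flatten [seq unbalanced_block n na nb | nb <- index_iota 0 n.+1]
          | na <- index_iota 0 n.+1].

Definition balanced (n : nat) : seq tree :=
  if odd n then [::] else
  flatten [seq [seq Node x y | y <- [seq y <- minimal n./2 | key y <= key x]]
          | x <- minimal n./2].

Lemma mem_unbalanced_block n na nb t : t \in unbalanced_block n na nb ->
  [/\ QBt n (na, nb), leaves (heavy t) = na, leaves (light t) = nb
    & exists2 l, l \in minimal na & exists2 r, r \in minimal nb & t = orient l r].
Proof.
rewrite /unbalanced_block; case: ifP => // qb /flatten_mapP [l ml /mapP [r mr ->]].
have [[_ leaves_l _] [_ leaves_r _]] := (minimalP ml, minimalP mr).
have /QBtP [lt_ba _ _ _] := qb.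
have [-> ->] : heavy (orient l r) = l /\ light (orient l r) = r.
  by apply: heavy_orient; rewrite leaves_l leaves_r.
by split=> //; exists l => //; exists r.
Qed.

Lemma mem_unbalanced n t : t \in unbalanced n ->
  exists na nb, t \in unbalanced_block n na nb.
Proof. by case/flatten_mapP => na _ /flatten_mapP [nb _ mt]; exists na, nb. Qed.

Lemma unbalanced_mem {n na nb l r} : QBt n (na, nb) ->
  l \in minimal na -> r \in minimal nb -> orient l r \in unbalanced n.
Proof.
move=> qb ml mr; have /QBtP [_ _ sum_n _] := qb.
apply/flatten_mapP; exists na; first by rewrite mem_index_iota; lia.
apply/flatten_mapP; exists nb; first by rewrite mem_index_iota; lia.
by rewrite /unbalanced_block qb; apply/flatten_mapP; exists l => //; apply: map_f.
Qed.

(* Each tree of [unbalanced n] is determined by the leaf numbers of its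
   children, its heavy child and its light child, so there is no repetition. *)
Lemma uniq_unbalanced n : uniq (unbalanced n).
Proof.
apply: (uniq_flatten_lab (fun t => leaves (heavy t))); first exact: iota_uniq.
  move=> na _; apply: (uniq_flatten_lab (fun t => leaves (light t))).
  - exact: iota_uniq.
  - move=> nb _; rewrite /unbalanced_block; case: ifP => // qb.
    apply: (uniq_flatten_lab heavy); first exact: undup_uniq.
      move=> l _; rewrite map_inj_in_uniq ?undup_uniq //.
      by move=> r1 r2 _ _ /orient_inj [[_ ->]|[<- ->]].
    move=> l t ml /mapP [r mr ->]; have /QBtP [lt_ba _ _ _] := qb.
    have [[_ leaves_l _] [_ leaves_r _]] := (minimalP ml, minimalP mr).
    by have [] := @heavy_orient l r; rewrite ?leaves_l ?leaves_r.
  - by move=> nb t _ /mem_unbalanced_block [].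
by move=> na t _ /flatten_mapP [nb _ /mem_unbalanced_block []].
Qed.

Lemma mem_balanced n t : t \in balanced n ->
  [/\ ~~ odd n & exists2 x, x \in minimal n./2 &
     exists2 y, y \in minimal n./2 & key y <= key x /\ t = Node x y].
Proof.
rewrite /balanced; case: ifP => // even_n /flatten_mapP [x mx /mapP [y]].
by rewrite mem_filter => /andP [le_yx my] ->; split=> //; exists x => //; exists y.
Qed.

Lemma balanced_mem {n x y} : ~~ odd n -> x \in minimal n./2 -> y \in minimal n./2 ->
  key y <= key x -> Node x y \in balanced n.
Proof.
rewrite /balanced => /negbTE -> mx my le_yx.
by apply/flatten_mapP; exists x => //; apply: map_f; rewrite mem_filter le_yx.
Qed.

Lemma uniq_balanced n : uniq (balanced n).
Proof.
rewrite /balanced; case: ifP => // _.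
apply: (uniq_flatten_lab heavy); first exact: undup_uniq.
  move=> x _; rewrite map_inj_uniq ?filter_uniq ?undup_uniq //.
  by move=> ? ? [].
move=> x t mx /mapP [y]; rewrite mem_filter => /andP [_ my] ->.
have [[_ leaves_x _] [_ leaves_y _]] := (minimalP mx, minimalP my).
by rewrite /= leaves_x leaves_y leqnn.
Qed.

(* The children of a balanced tree have equally many leaves, whereas those of
   an unbalanced one do not: the two lists are disjoint. *)
Lemma balanced_not_unbalanced n t : t \in balanced n -> t \notin unbalanced n.
Proof.
case/mem_balanced => _ [x mx [y my [_ ->]]]; apply/negP.
case/mem_unbalanced => na [nb /mem_unbalanced_block [qb]].
have /QBtP [lt_ba _ _ _] := qb.
have [[_ leaves_x _] [_ leaves_y _]] := (minimalP mx, minimalP my).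
rewrite /= leaves_x leaves_y leqnn => heavy_na light_nb _.
by move: lt_ba; rewrite -heavy_na -light_nb leaves_x leaves_y ltnn.
Qed.

Lemma listed_minimal n t : t \in unbalanced n ++ balanced n -> t \in minimal n.
Proof.
rewrite mem_cat mem_minimal => /orP [/mem_unbalanced [na [nb]]|].
  case/mem_unbalanced_block => qb _ _ [l ml [r mr ->]].
  have [[cl ll kl] [cr lr kr]] := (minimalP ml, minimalP mr).
  have /QBtP [lt_ba _ sum_n qb_eq] := qb.
  rewrite canon_orient // leaves_orient colless_orient /= ll lr kl kr sum_n !eqxx.
  by apply/eqP; lia.
case/mem_balanced => even_n [x mx [y my [le_yx ->]]].
have [[cx lx kx] [cy ly ky]] := (minimalP mx, minimalP my).
have n_double : (n./2).*2 = n by rewrite -[RHS]odd_double_half (negbTE even_n).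
have half_gt0 : 0 < n./2 by rewrite -lx leaves_gt0.
rewrite /= cx cy orient_Node // lx ly kx ky addnn n_double maxnn minnn subnn addn0.
by rewrite -cmin_double // n_double !eqxx.
Qed.

Lemma minimal_listed n t : 2 <= n -> t \in minimal n -> t \in unbalanced n ++ balanced n.
Proof.
move=> n_ge2 /minimalP [ct lt kt].
case: t ct lt kt => [|x y] ct lt kt; first by rewrite -lt in n_ge2.
have [cx cy le_yx] := canon_node ct.
rewrite /= in lt; rewrite -lt in kt.
have [kx ky qb_eq] := minimal_node kt.
have mx : x \in minimal (leaves x) by rewrite mem_minimal cx kx !eqxx.
have my : y \in minimal (leaves y) by rewrite mem_minimal cy ky !eqxx.
have := leaves_gt0 x; have := leaves_gt0 y.
rewrite mem_cat; case: (ltngtP (leaves x) (leaves y)) => cmp_xy y_gt0 x_gt0.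
- have qb : QBt n (leaves y, leaves x) by apply/QBtP; rewrite -lt; split; lia.
  have -> : Node x y = orient y x.
    rewrite /orient; case: leqP => // le_xy.
    have /key_inj exy : key x = key y by apply/eqP; rewrite eqn_leq le_xy le_yx.
    by rewrite exy ltnn in cmp_xy.
  by rewrite (unbalanced_mem qb my mx).
- have qb : QBt n (leaves x, leaves y) by apply/QBtP; rewrite -lt; split; lia.
  by rewrite -orient_Node // (unbalanced_mem qb mx my).
have half_n : n./2 = leaves x by rewrite -lt cmp_xy addnn doubleK.
have even_n : ~~ odd n by rewrite -lt cmp_xy addnn odd_double.
by rewrite (balanced_mem even_n) ?orbT // half_n // cmp_xy.
Qed.

Lemma size_unbalanced n :
  size (unbalanced n) =
  \sum_(na < n.+1) \sum_(nb < n.+1 | QBt n (nat_of_ord na, nat_of_ord nb))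
      ctilde na * ctilde nb.
Proof.
rewrite size_flatten_map big_mkord; apply: eq_bigr => na _.
rewrite size_flatten_map big_mkord [in RHS]big_mkcond; apply: eq_bigr => nb _.
rewrite /unbalanced_block !ctilde_minimal; case: QBt => //.
rewrite size_flatten_map (eq_bigr (fun=> size (minimal nb))) => [|l _]; last exact: size_map.
by rewrite big_const_seq count_predT iter_addn_0 mulnC.
Qed.

Lemma size_balanced n : size (balanced n) = 'C(ctilde n./2 + 1, 2) * delta_even n.
Proof.
rewrite /balanced /delta_even; case: odd; first by rewrite muln0.
rewrite muln1 size_flatten_map ctilde_minimal -(count_key_pairs key_inj (undup_uniq _)).
by apply: eq_bigr => x _; rewrite size_map size_filter.
Qed.

Theorem proposition4 :
  ctilde 1 = 1 /\
  forall n : nat, 2 <= n ->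
    ctilde n =
      \sum_(na < n.+1) \sum_(nb < n.+1 | QBt n (nat_of_ord na, nat_of_ord nb))
          ctilde na * ctilde nb
      + 'C(ctilde (n./2) + 1, 2) * delta_even n.
Proof.
split; first by vm_compute.
move=> n n_ge2; rewrite -size_unbalanced -size_balanced -size_cat ctilde_minimal.
apply/perm_size/uniq_perm; first exact: undup_uniq.
  rewrite cat_uniq uniq_unbalanced uniq_balanced andbT /=.
  by apply/hasPn => t /balanced_not_unbalanced.
by move=> t; apply/idP/idP; [exact: minimal_listed | exact: listed_minimal].
Qed.
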